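(* Let $a_0,a_1,a_2\ge0$ with $a_1\ge a_2$, and let $\Delta t\in(0,3/(4a_0)]$ (any $\Delta t>0$ if $a_0=0$). Let $\{x_n\}_{n\ge0}$, $\{y_n\}_{n\ge1}$, $\{z_n\}_{n\ge2}$, $\{b_n\}_{n\ge2}$ be non-negative sequences such that $$\frac1{\Delta t}\Big(\tfrac32x_n-2x_{n-1}+\tfrac12x_{n-2}+y_n-y_{n-1}\Big)+z_n\le a_0x_n+a_1x_{n-1}+a_2x_{n-2}+b_n\quad\forall n\ge2.$$ Then, with $a_*:=a_0+a_1+a_2$, for all $n\ge2$, $$x_n+\tfrac23y_n+\tfrac23\Delta t\sum_{i=2}^nz_i\le\big(\exp(2a_*n\Delta t)+1\big)\Big(x_0+\tfrac32x_1+y_1+\Delta t\sum_{i=2}^nb_i\Big).$$ *)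

From Stdlib Require Import Reals.
Open Scope R_scope.

(* sum_range m n f = f m + f (m+1) + ... + f n  (0 if n < m). *)
Fixpoint sum_upto (m : nat) (f : nat -> R) (n : nat) : R :=
  match n with
  | O => if Nat.leb m 0 then f 0%nat else 0
  | S k => sum_upto m f k + (if Nat.leb m (S k) then f (S k) else 0)
  end.

Definition sum_range (m n : nat) (f : nat -> R) : R := sum_upto m f n.

From Stdlib Require Import Reals Lra Psatz Lia Wf_nat.
Open Scope R_scope.

(* Write u = a0 dt, v = a* dt, r = exp(2v), E_n = x_n + 2/3 y_n + 2/3 dt sum_{i=2}^n z_i
   and D_N = x_0 + 3/2 x_1 + y_1 + dt sum_{i=2}^N b_i.  The proof has three parts.

   1. Telescoping.  Since 3/2 x_n - 2 x_{n-1} + 1/2 x_{n-2} is the difference of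
      3/2 x_n - 1/2 x_{n-1} at n and n-1, summing the hypothesis over 2..k and
      bounding the linear right-hand side gives, for k <= N,
        (3/2 - u) E_k <= x_{k-1} / 2 + D_N + v sum_{i<k} x_i.
   2. A growth inequality in the reals: for r >= (1 + v/2)^4 (a minorant of
      exp(2v)), u <= min(v, 3/4) and m >= 1,
        (r^m + 1)/2 + 1 + 2 v sum_{i<=m} r^i <= (3/2 - u) (r^(m+1) + 1).
      Multiplied by r - 1 it is affine in X = r^m >= r, with nonnegative slope
      and nonnegative value at X = r; both reduce to explicit polynomial
      inequalities in v.
   3. Strong induction: x_i <= (r^i + 1) D_N for all i <= N, by 1 and 2 (using
      sum_{i<=m} (r^i + 1) <= 2 sum_{i<=m} r^i); the same step bounds E_N. *)

(* The quartic minorant (1 + v/2)^4 of exp(2v), and the slope and the base value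
   of the growth inequality of part 2 (after multiplication by r - 1). *)
Definition exp2_minorant (v : R) : R := (1 + v / 2) ^ 4.
Definition growth_slope (u v r : R) : R := (r - 1) * ((3/2 - u) * r - 1/2) - 2 * v * r.
Definition growth_base (u v r : R) : R :=
  (3/2 - u) * r ^ 2 - (1/2 + 2 * v) * r - u - 2 * v.

Lemma exp_INR_mult (n : nat) (c : R) : exp (INR n * c) = exp c ^ n.
Proof.
  induction n as [|n IH].
  - rewrite Rmult_0_l; apply exp_0.
  - rewrite S_INR, Rmult_plus_distr_r, Rmult_1_l, exp_plus, IH; simpl; ring.
Qed.

(* (1 + v/2)^4 <= exp(v/2)^4 = exp(2v). *)
Lemma exp2_minorant_le_exp (v : R) : 0 <= v -> exp2_minorant v <= exp (2 * v).
Proof.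
  intros Hv; unfold exp2_minorant.
  replace (2 * v) with (INR 4 * (v / 2)) by (simpl; field).
  rewrite exp_INR_mult; apply pow_incr.
  pose proof (exp_ineq1_le (v / 2)); lra.
Qed.

Lemma exp2_minorant_ge (v : R) : 0 <= v -> 1 + 2 * v <= exp2_minorant v.
Proof.
  intros Hv; unfold exp2_minorant.
  assert (0 <= v ^ 2) by nra. assert (0 <= v ^ 3) by nra. assert (0 <= v ^ 4) by nra.
  nra.
Qed.

(* Both coefficients decrease in u, so it suffices to treat u = v when v <= 3/4
   and u = 3/4 (writing v = 3/4 + w) otherwise; these are polynomial inequalities. *)
Lemma growth_coefs_at_minorant (u v : R) :
  0 <= u -> u <= v -> u <= 3/4 ->
  0 <= growth_slope u v (exp2_minorant v) /\ 0 <= growth_base u v (exp2_minorant v).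
Proof.
  intros Hu Huv Hu34.
  set (L := exp2_minorant v).
  assert (HL : 1 + 2 * v <= L) by (apply exp2_minorant_ge; lra).
  destruct (Rle_dec v (3/4)) as [Hv | Hv].
  - assert (HA : 0 <= growth_slope v v L).
    { unfold growth_slope, L, exp2_minorant.
      assert (0 <= v ^ 2) by nra. assert (v ^ 2 <= 9/16) by nra. nra. }
    assert (Hg : 0 <= growth_base v v L).
    { unfold growth_base, L, exp2_minorant.
      assert (0 <= v ^ 2) by nra. assert (v ^ 2 <= 9/16) by nra. nra. }
    assert (0 <= (v - u) * (L * L - L)) by (apply Rmult_le_pos; nra).
    assert (0 <= (v - u) * (L * L + 1)) by (apply Rmult_le_pos; nra).
    unfold growth_slope, growth_base in *; split; nra.
  - set (w := v - 3/4).
    assert (Hw : 0 <= w) by (unfold w; lra).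
    assert (0 <= w ^ 2) by nra. assert (0 <= w ^ 3) by nra. assert (0 <= w ^ 4) by nra.
    assert (Hvw : v = 3/4 + w) by (unfold w; ring).
    assert (HA : 0 <= growth_slope (3/4) v L).
    { unfold growth_slope, L, exp2_minorant; rewrite Hvw; nra. }
    assert (Hg : 0 <= growth_base (3/4) v L).
    { unfold growth_base, L, exp2_minorant; rewrite Hvw; nra. }
    assert (0 <= (3/4 - u) * (L * L - L)) by (apply Rmult_le_pos; nra).
    assert (0 <= (3/4 - u) * (L * L + 1)) by (apply Rmult_le_pos; nra).
    unfold growth_slope, growth_base in *; split; nra.
Qed.

(* Both coefficients are convex quadratics in r, increasing beyond the minorant. *)
Lemma growth_coefs_nonneg (u v r : R) :
  0 <= u -> u <= v -> u <= 3/4 -> exp2_minorant v <= r ->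
  0 <= growth_slope u v r /\ 0 <= growth_base u v r.
Proof.
  intros Hu Huv Hu34 Hr.
  assert (HL : 1 + 2 * v <= exp2_minorant v) by (apply exp2_minorant_ge; lra).
  destruct (growth_coefs_at_minorant u v Hu Huv Hu34) as [HA Hg].
  set (L := exp2_minorant v) in *.
  assert (0 <= (r - L) * ((3/2 - u) * (r + L) - (2 - u + 2 * v))) by (apply Rmult_le_pos; nra).
  assert (0 <= (r - L) * ((3/2 - u) * (r + L) - (1/2 + 2 * v))) by (apply Rmult_le_pos; nra).
  unfold growth_slope, growth_base in *; split; nra.
Qed.

(* The growth inequality of part 2; sum_{i<=m} r^i is eliminated by the
   geometric identity (r - 1) sum_{i<=m} r^i = r^(m+1) - 1. *)
Lemma growth_step (u v r : R) (m : nat) :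
  0 <= u -> u <= v -> u <= 3/4 -> exp2_minorant v <= r -> (1 <= m)%nat ->
  (r ^ m + 1) / 2 + 1 + 2 * v * sum_f_R0 (fun i => r ^ i) m
  <= (3/2 - u) * (r ^ S m + 1).
Proof.
  intros Hu Huv Hu34 Hr Hm.
  assert (HL : 1 + 2 * v <= exp2_minorant v) by (apply exp2_minorant_ge; lra).
  set (X := r ^ m); set (G := sum_f_R0 (fun i => r ^ i) m).
  assert (HrX : r <= X) by (unfold X; rewrite <- (pow_1 r) at 1; apply Rle_pow; [lra | lia]).
  replace (r ^ S m) with (r * X) by reflexivity.
  destruct (Req_dec v 0) as [Hv0 | Hv0].
  - rewrite Hv0 in *; assert (u = 0) by lra; subst u; nra.
  - assert (Hgeom : (r - 1) * G = r * X - 1).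
    { unfold G, X; rewrite Rmult_comm, GP_finite, Nat.add_1_r; reflexivity. }
    destruct (growth_coefs_nonneg u v r Hu Huv Hu34 Hr) as [HA Hg].
    assert (Hdiff : (r - 1) * ((3/2 - u) * (r * X + 1) - ((X + 1) / 2 + 1 + 2 * v * G))
                    = growth_slope u v r * (X - r) + (r - 1) * growth_base u v r).
    { replace (2 * v * G) with (2 * v * ((r - 1) * G) / (r - 1)) by (field; lra).
      rewrite Hgeom; unfold growth_slope, growth_base; field; lra. }
    assert (Hpos : 0 <= (r - 1) * ((3/2 - u) * (r * X + 1) - ((X + 1) / 2 + 1 + 2 * v * G))).
    { rewrite Hdiff; apply Rplus_le_le_0_compat; apply Rmult_le_pos; lra. }
    assert (Hr1 : 0 < r - 1) by lra.
    apply Rmult_le_reg_l with (r - 1); [exact Hr1|].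
    rewrite Rmult_minus_distr_l in Hpos; lra.
Qed.

Lemma sum_range_2_1 (f : nat -> R) : sum_range 2 1 f = 0.
Proof. unfold sum_range; simpl; ring. Qed.

Lemma sum_range_2_succ (f : nat -> R) (m : nat) :
  sum_range 2 (S (S m)) f = sum_range 2 (S m) f + f (S (S m)).
Proof. reflexivity. Qed.

Lemma sum_range_2_mono (f : nat -> R) (k N : nat) :
  (forall i, (2 <= i)%nat -> 0 <= f i) -> (k <= N)%nat ->
  sum_range 2 k f <= sum_range 2 N f.
Proof.
  intros Hf HkN; induction HkN as [|N HkN IH]; [lra|].
  unfold sum_range in *; cbn [sum_upto].
  destruct (Nat.leb 2 (S N)) eqn:E; [|lra].
  apply Nat.leb_le, Hf in E; lra.
Qed.

Lemma sum_range_2_nonneg (f : nat -> R) (N : nat) :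
  (forall i, (2 <= i)%nat -> 0 <= f i) -> 0 <= sum_range 2 N f.
Proof.
  intros Hf; destruct N as [|N]; [unfold sum_range; simpl; lra|].
  rewrite <- (sum_range_2_1 f); apply sum_range_2_mono; [exact Hf | lia].
Qed.

Section Bdf2Energy.

Variables a0 a1 a2 dt : R.
Variables x y z b : nat -> R.

Hypothesis Ha0 : 0 <= a0.
Hypothesis Ha1 : 0 <= a1.
Hypothesis Ha2 : 0 <= a2.
Hypothesis Hdt : 0 < dt.
Hypothesis Hdt_a0 : dt * a0 <= 3/4.
Hypothesis Hx : forall n, 0 <= x n.
Hypothesis Hy : forall n, (1 <= n)%nat -> 0 <= y n.
Hypothesis Hz : forall n, (2 <= n)%nat -> 0 <= z n.
Hypothesis Hb : forall n, (2 <= n)%nat -> 0 <= b n.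
Hypothesis Hrec : forall m,
  / dt * (3/2 * x (S (S m)) - 2 * x (S m) + 1/2 * x m + y (S (S m)) - y (S m))
  + z (S (S m))
  <= a0 * x (S (S m)) + a1 * x (S m) + a2 * x m + b (S (S m)).

Definition lin_rhs (n : nat) : R := a0 * x n + a1 * x (n - 1) + a2 * x (n - 2).
Definition energy (n : nat) : R := x n + 2/3 * y n + 2/3 * dt * sum_range 2 n z.
Definition data (N : nat) : R := x 0 + 3/2 * x 1 + y 1 + dt * sum_range 2 N b.

Lemma lin_rhs_SS (m : nat) :
  lin_rhs (S (S m)) = a0 * x (S (S m)) + a1 * x (S m) + a2 * x m.
Proof. unfold lin_rhs; simpl Nat.sub; rewrite Nat.sub_0_r; reflexivity. Qed.

(* Part 1: the hypothesis multiplied by dt and summed over 2..m+1 telescopes. *)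
Lemma telescoped_energy (m : nat) :
  3/2 * x (S m) - 1/2 * x m + y (S m) + dt * sum_range 2 (S m) z
  <= 3/2 * x 1 - 1/2 * x 0 + y 1 + dt * sum_range 2 (S m) b
     + dt * sum_range 2 (S m) lin_rhs.
Proof.
  induction m as [|m IH].
  - rewrite !sum_range_2_1; lra.
  - rewrite !sum_range_2_succ.
    assert (Hm : 3/2 * x (S (S m)) - 2 * x (S m) + 1/2 * x m + y (S (S m)) - y (S m)
                 + dt * z (S (S m)) <= dt * (lin_rhs (S (S m)) + b (S (S m)))).
    { pose proof (Rmult_le_compat_l dt _ _ (Rlt_le _ _ Hdt) (Hrec m)) as H.
      rewrite lin_rhs_SS.
      rewrite Rmult_plus_distr_l, <- Rmult_assoc, Rinv_r, Rmult_1_l in H; lra. }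
    lra.
Qed.

(* Summing the linear right-hand side loses at most a0 x_(m+1) + a* sum_{i<=m} x_i;
   the extra term a2 x_m makes the induction go through. *)
Lemma lin_rhs_sum (m : nat) :
  sum_range 2 (S m) lin_rhs + a2 * x m
  <= a0 * x (S m) + (a0 + a1 + a2) * sum_f_R0 x m.
Proof.
  pose proof (Hx 0); pose proof (Hx 1).
  induction m as [|m IH].
  - rewrite sum_range_2_1; simpl; nra.
  - rewrite sum_range_2_succ, tech5, lin_rhs_SS.
    pose proof (Hx (S (S m))); pose proof (Hx m); nra.
Qed.

Lemma data_ge_initial (N : nat) : x 0 + 3/2 * x 1 <= data N.
Proof.
  unfold data; pose proof (Hy 1 (le_n 1)).
  pose proof (sum_range_2_nonneg b N Hb); nra.
Qed.

Lemma energy_step (N m : nat) : (S m <= N)%nat ->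
  (3/2 - dt * a0) * energy (S m)
  <= x m / 2 + data N + dt * (a0 + a1 + a2) * sum_f_R0 x m.
Proof.
  intros HmN.
  pose proof (telescoped_energy m) as Htel.
  pose proof (lin_rhs_sum m) as Hlin.
  assert (Hdata : 3/2 * x 1 - 1/2 * x 0 + y 1 + dt * sum_range 2 (S m) b <= data N).
  { unfold data; pose proof (Hx 0).
    pose proof (sum_range_2_mono b _ _ Hb HmN); nra. }
  assert (Hx_energy : x (S m) <= energy (S m)).
  { unfold energy; pose proof (Hy (S m) ltac:(lia)).
    pose proof (sum_range_2_nonneg z (S m) Hz); nra. }
  assert (0 <= dt * a2 * x m)
    by (apply Rmult_le_pos; [apply Rmult_le_pos; lra | apply Hx]).
  assert (dt * a0 * x (S m) <= dt * a0 * energy (S m))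
    by (apply Rmult_le_compat_l; [nra | exact Hx_energy]).
  unfold energy in *; nra.
Qed.

Definition growth_factor : R := exp (2 * (dt * (a0 + a1 + a2))).

Lemma energy_bound_from_history (N m : nat) : (1 <= m)%nat -> (S m <= N)%nat ->
  (forall i, (i <= m)%nat -> x i <= (growth_factor ^ i + 1) * data N) ->
  energy (S m) <= (growth_factor ^ S m + 1) * data N.
Proof.
  set (r := growth_factor); set (u := dt * a0); set (v := dt * (a0 + a1 + a2)).
  set (D := data N); intros Hm HmN Hhist.
  assert (Hu : 0 <= u) by (unfold u; nra).
  assert (Huv : u <= v) by (unfold u, v; nra).
  assert (HrL : exp2_minorant v <= r)
    by (apply exp2_minorant_le_exp; unfold v; nra).
  assert (Hr1 : 1 <= r) by (pose proof (exp2_minorant_ge v ltac:(unfold v; nra)); nra).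
  assert (HD : 0 <= D) by (pose proof (data_ge_initial N); pose proof (Hx 0); pose proof (Hx 1); unfold D; lra).
  assert (Hsum : sum_f_R0 x m <= 2 * D * sum_f_R0 (fun i => r ^ i) m).
  { rewrite scal_sum; apply sum_Rle; intros i Hi.
    pose proof (Hhist i Hi); pose proof (pow_R1_Rle r i Hr1).
    assert (0 <= (r ^ i - 1) * D) by (apply Rmult_le_pos; lra); nra. }
  pose proof (energy_step N m HmN) as Hstep.
  pose proof (growth_step u v r m Hu Huv Hdt_a0 HrL Hm) as Hgrowth.
  pose proof (Hhist m (le_n m)) as Hxm.
  assert (Hdiv : (3/2 - u) * energy (S m) <= (3/2 - u) * ((r ^ S m + 1) * D)).
  { fold u v D in Hstep.
    pose proof (Rmult_le_compat_r D _ _ HD Hgrowth).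
    assert (v * sum_f_R0 x m <= v * (2 * D * sum_f_R0 (fun i => r ^ i) m))
      by (apply Rmult_le_compat_l; [unfold v; nra | exact Hsum]).
    nra. }
  apply Rmult_le_reg_l with (3/2 - u); [unfold u; lra | exact Hdiv].
Qed.

Lemma x_bound (N k : nat) : (k <= N)%nat -> x k <= (growth_factor ^ k + 1) * data N.
Proof.
  induction k as [k IH] using (well_founded_induction lt_wf); intros HkN.
  pose proof (data_ge_initial N); pose proof (Hx 0); pose proof (Hx 1).
  assert (0 <= growth_factor) by (apply Rlt_le, exp_pos).
  destruct k as [|[|m]]; simpl pow.
  - lra.
  - nra.
  - apply Rle_trans with (energy (S (S m))).
    + unfold energy; pose proof (Hy (S (S m)) ltac:(lia)).
      pose proof (sum_range_2_nonneg z (S (S m)) Hz); nra.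
    + apply energy_bound_from_history; [lia | exact HkN |].
      intros i Hi; apply IH; lia.
Qed.

Lemma energy_bound (N : nat) : (2 <= N)%nat ->
  energy N <= (growth_factor ^ N + 1) * data N.
Proof.
  intros HN; destruct N as [|m]; [lia|].
  apply energy_bound_from_history; [lia | lia |].
  intros i Hi; apply x_bound; lia.
Qed.

End Bdf2Energy.

Lemma step_restriction (a0 dt : R) :
  0 <= a0 -> 0 < dt -> (a0 = 0 \/ dt <= 3 / (4 * a0)) -> dt * a0 <= 3/4.
Proof.
  intros Ha0 Hdt [-> | Hle]; [lra|].
  destruct (Req_dec a0 0) as [-> | Hne]; [lra|].
  apply Rmult_le_compat_r with (r := a0) in Hle; [|lra].
  replace (3 / (4 * a0) * a0) with (3/4) in Hle by (field; lra); exact Hle.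
Qed.

Theorem lemma1 (a0 a1 a2 dt : R) (x y z b : nat -> R) :
  0 <= a0 -> 0 <= a1 -> 0 <= a2 -> a2 <= a1 ->
  0 < dt -> (a0 = 0 \/ dt <= 3 / (4 * a0)) ->
  (forall n : nat, 0 <= x n) ->
  (forall n : nat, (1 <= n)%nat -> 0 <= y n) ->
  (forall n : nat, (2 <= n)%nat -> 0 <= z n) ->
  (forall n : nat, (2 <= n)%nat -> 0 <= b n) ->
  (forall n : nat, (2 <= n)%nat ->
     / dt * (3 / 2 * x n - 2 * x (n - 1)%nat + 1 / 2 * x (n - 2)%nat
             + y n - y (n - 1)%nat) + z n
     <= a0 * x n + a1 * x (n - 1)%nat + a2 * x (n - 2)%nat + b n) ->
  forall n : nat, (2 <= n)%nat ->
    x n + 2 / 3 * y n + 2 / 3 * dt * sum_range 2 n z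
    <= (exp (2 * (a0 + a1 + a2) * INR n * dt) + 1)
       * (x 0%nat + 3 / 2 * x 1%nat + y 1%nat + dt * sum_range 2 n b).
Proof.
  intros Ha0 Ha1 Ha2 _ Hdt Hdt0 Hx Hy Hz Hb Hrec n Hn.
  assert (Hrec_shift : forall m,
    / dt * (3/2 * x (S (S m)) - 2 * x (S m) + 1/2 * x m + y (S (S m)) - y (S m))
    + z (S (S m)) <= a0 * x (S (S m)) + a1 * x (S m) + a2 * x m + b (S (S m))).
  { intros m; pose proof (Hrec (S (S m)) ltac:(lia)) as Hm.
    simpl Nat.sub in Hm; rewrite Nat.sub_0_r in Hm; exact Hm. }
  replace (exp (2 * (a0 + a1 + a2) * INR n * dt)) with (growth_factor a0 a1 a2 dt ^ n)
    by (unfold growth_factor; rewrite <- exp_INR_mult; f_equal; ring).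
  exact (energy_bound a0 a1 a2 dt x y z b Ha0 Ha1 Ha2 Hdt
           (step_restriction a0 dt Ha0 Hdt Hdt0) Hx Hy Hz Hb Hrec_shift n Hn).
Qed.
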